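(* Define $\kappa_4(\vec c)=\frac{\sum_j c_j^4}{\left(\sum_j c_j^2\right)^2}$ for nonzero $\vec c\in\mathbb{R}_{\ge0}^N$. For every nonzero $\vec c=(c_1,\dots,c_N)\in\mathbb{R}_{\ge0}^N$ whose entries are not all equal and every real $\alpha>0$, $\kappa_4(c_1+\alpha,\dots,c_N+\alpha)<\kappa_4(\vec c)$. *)

From HB Require Import structures.
From mathcomp Require Import all_boot all_order all_algebra.
From mathcomp Require Import reals.
Set Implicit Arguments. Unset Strict Implicit. Unset Printing Implicit Defensive.
Import Order.TTheory GRing.Theory Num.Theory.
Local Open Scope ring_scope.

Definition kappa4 (R : realType) (N : nat) (c : 'I_N -> R) : R :=
  (\sum_(j < N) c j ^+ 4) / (\sum_(j < N) c j ^+ 2) ^+ 2.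

(* Write P_n = sum_j c_j^n.  Expanding binomially in alpha, the numerator of
   kappa4 c - kappa4 (c + alpha), after clearing denominators, is a polynomial
   in alpha whose coefficients are nonnegative combinations of the gaps
   P_1 P_4 - P_2 P_3, P_1 P_3 - P_2^2 and P_0 P_4 - P_2^2.  Each gap is a double
   sum over pairs (i, j) whose symmetrization is
   (c_i c_j)^a (c_i^m - c_j^m)(c_i^n - c_j^n) >= 0, and the last one is strictly
   positive as soon as two entries differ. *)
From HB Require Import structures.
From mathcomp Require Import all_boot all_order all_algebra.
From mathcomp Require Import reals.
From mathcomp Require Import ring.
Set Implicit Arguments.
Unset Strict Implicit.
Unset Printing Implicit Defensive.

Import Order.TTheory GRing.Theory Num.Theory.
Local Open Scope ring_scope.

Section DoubleSum.
Variables (R : numDomainType) (N : nat).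
Implicit Types (F : 'I_N -> R) (f : 'I_N -> 'I_N -> R).

Lemma sumr_gt0 F j0 : (forall j, 0 <= F j) -> 0 < F j0 -> 0 < \sum_j F j.
Proof.
move=> F_ge0 Fj0_gt0; rewrite (bigD1 j0) //=.
by apply: ltr_pwDl => //; apply: sumr_ge0.
Qed.

Lemma double_sum_sym f :
  (\sum_i \sum_j f i j) *+ 2 = \sum_i \sum_j (f i j + f j i).
Proof.
rewrite mulr2n {2}exchange_big -big_split /=.
by apply: eq_bigr => i _; rewrite -big_split.
Qed.

Lemma double_sum_sym_ge0 f :
  (forall i j, 0 <= f i j + f j i) -> 0 <= \sum_i \sum_j f i j.
Proof.
move=> f_ge0; rewrite -(pmulrn_lge0 _ (isT : (0 < 2)%N)) double_sum_sym.
by do 2!apply: sumr_ge0 => ? _.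
Qed.

Lemma double_sum_sym_gt0 f i0 j0 :
  (forall i j, 0 <= f i j + f j i) -> 0 < f i0 j0 + f j0 i0 ->
  0 < \sum_i \sum_j f i j.
Proof.
move=> f_ge0 f0_gt0; rewrite -(pmulrn_lgt0 _ (isT : (0 < 2)%N)) double_sum_sym.
apply: (sumr_gt0 (j0 := i0)); last exact: sumr_gt0 f0_gt0.
by move=> i; apply: sumr_ge0.
Qed.

Lemma mulr_sumsB (a b u v : 'I_N -> R) :
  (\sum_i a i) * (\sum_j b j) - (\sum_i u i) * (\sum_j v j)
  = \sum_i \sum_j (a i * b j - u i * v j).
Proof.
rewrite !mulr_suml -sumrB; apply: eq_bigr => i _.
by rewrite !mulr_sumr -sumrB.
Qed.

End DoubleSum.

Section PowerDifferences.
Variable R : realDomainType.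
Implicit Types x y : R.

Lemma mulr_subXn_ge0 x y m n :
  0 <= x -> 0 <= y -> 0 <= (x ^+ m - y ^+ m) * (x ^+ n - y ^+ n).
Proof.
move=> x_ge0 y_ge0; have [le_xy | /ltW le_yx] := lerP x y.
- by apply: mulr_le0; rewrite subr_le0; apply: lerXn2r; rewrite ?nnegrE.
- by apply: mulr_ge0; rewrite subr_ge0; apply: lerXn2r; rewrite ?nnegrE.
Qed.

Lemma mulr_subXn_gt0 x y m n : (0 < m)%N -> (0 < n)%N ->
  0 <= x -> 0 <= y -> x != y -> 0 < (x ^+ m - y ^+ m) * (x ^+ n - y ^+ n).
Proof.
move=> m_gt0 n_gt0 x_ge0 y_ge0; rewrite neq_lt => /orP[lt_xy | lt_yx].
- by rewrite nmulr_rgt0 subr_lt0 ltrXn2r // -lt0n.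
- by apply: mulr_gt0; rewrite subr_gt0 ltrXn2r // -lt0n.
Qed.

End PowerDifferences.

Definition pow_sum (R : pzSemiRingType) (N : nat) (c : 'I_N -> R) (n : nat) : R :=
  \sum_(j < N) c j ^+ n.

Lemma kappa4E (R : realType) (N : nat) (c : 'I_N -> R) :
  kappa4 c = pow_sum c 4 / pow_sum c 2 ^+ 2.
Proof. by []. Qed.

Section Shift.
Variables (R : comPzRingType) (N : nat) (c : 'I_N -> R) (alpha : R).

Lemma pow_sum_addr2 : pow_sum (fun j => c j + alpha) 2
  = pow_sum c 2 + 2 * alpha * pow_sum c 1 + alpha ^+ 2 * pow_sum c 0.
Proof.
by rewrite /pow_sum !mulr_sumr -!big_split /=; apply: eq_bigr => j _; ring.
Qed.

Lemma pow_sum_addr4 : pow_sum (fun j => c j + alpha) 4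
  = pow_sum c 4 + 4 * alpha * pow_sum c 3 + 6 * alpha ^+ 2 * pow_sum c 2
    + 4 * alpha ^+ 3 * pow_sum c 1 + alpha ^+ 4 * pow_sum c 0.
Proof.
by rewrite /pow_sum !mulr_sumr -!big_split /=; apply: eq_bigr => j _; ring.
Qed.

End Shift.

Lemma exprD_pair_sym (R : comPzRingType) (x y : R) a m n :
  x ^+ a * y ^+ (a + m + n) - x ^+ (a + m) * y ^+ (a + n)
    + (y ^+ a * x ^+ (a + m + n) - y ^+ (a + m) * x ^+ (a + n))
  = (x * y) ^+ a * ((x ^+ m - y ^+ m) * (x ^+ n - y ^+ n)).
Proof. by rewrite !exprD exprMn; ring. Qed.

Section PowerSums.
Variables (R : realDomainType) (N : nat) (c : 'I_N -> R).
Hypothesis c_ge0 : forall j, 0 <= c j.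

Lemma pow_sum_ge0 n : 0 <= pow_sum c n.
Proof. by apply: sumr_ge0 => j _; rewrite exprn_ge0. Qed.

Lemma pow_sum_gt0 n k : c k != 0 -> 0 < pow_sum c n.
Proof.
move=> ck_neq0; apply: (sumr_gt0 (j0 := k)) => [j|]; first exact: exprn_ge0.
by rewrite exprn_gt0 // lt0r ck_neq0 c_ge0.
Qed.

Lemma pow_sum_mul_le a m n :
  pow_sum c (a + m) * pow_sum c (a + n) <= pow_sum c a * pow_sum c (a + m + n).
Proof.
rewrite -subr_ge0 mulr_sumsB; apply: double_sum_sym_ge0 => i j.
rewrite exprD_pair_sym; apply: mulr_ge0; last exact: mulr_subXn_ge0.
by rewrite exprn_ge0 ?mulr_ge0.
Qed.

Lemma pow_sum_mul_lt m n i j : (0 < m)%N -> (0 < n)%N -> c i != c j ->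
  pow_sum c m * pow_sum c n < pow_sum c 0 * pow_sum c (m + n).
Proof.
move=> m_gt0 n_gt0 cij.
have pair (x y : R) : x ^+ 0 * y ^+ (m + n) - x ^+ m * y ^+ n
    + (y ^+ 0 * x ^+ (m + n) - y ^+ m * x ^+ n)
  = (x ^+ m - y ^+ m) * (x ^+ n - y ^+ n).
  by have := exprD_pair_sym x y 0 m n; rewrite !add0n !expr0 !mul1r.
rewrite -subr_gt0 mulr_sumsB; apply: (double_sum_sym_gt0 (i0 := i) (j0 := j)).
  by move=> i' j'; rewrite pair mulr_subXn_ge0.
by rewrite pair mulr_subXn_gt0.
Qed.

End PowerSums.

Lemma shifted_ratio_lt (R : realFieldType) (p0 p1 p2 p3 p4 a : R) :
  0 < a -> 0 < p0 -> 0 <= p1 -> 0 < p2 ->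
  p2 * p3 <= p1 * p4 -> p2 * p2 <= p1 * p3 -> p2 * p2 < p0 * p4 ->
  (p4 + 4 * a * p3 + 6 * a ^+ 2 * p2 + 4 * a ^+ 3 * p1 + a ^+ 4 * p0)
    / (p2 + 2 * a * p1 + a ^+ 2 * p0) ^+ 2
  < p4 / p2 ^+ 2.
Proof.
move=> a_gt0 p0_gt0 p1_ge0 p2_gt0 gapA gapB gapC.
rewrite -subr_ge0 in gapA; rewrite -subr_ge0 in gapB; rewrite -subr_gt0 in gapC.
have a_ge0 := ltW a_gt0; have p0_ge0 := ltW p0_gt0; have p2_ge0 := ltW p2_gt0.
set S := p2 + 2 * a * p1 + a ^+ 2 * p0.
have S_gt0 : 0 < S by rewrite /S -addrA ltr_pwDl // addr_ge0 ?mulr_ge0.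
rewrite ltr_pdivrMr ?exprn_gt0 // [_ / _ * _]mulrAC ltr_pdivlMr ?exprn_gt0 //.
rewrite -subr_gt0.
have -> : p4 * S ^+ 2
    - (p4 + 4 * a * p3 + 6 * a ^+ 2 * p2 + 4 * a ^+ 3 * p1 + a ^+ 4 * p0) * p2 ^+ 2
  = 4 * a * p2 * (p1 * p4 - p2 * p3)
    + a ^+ 2 * (4 * p1 * (p1 * p4 - p2 * p3) + 4 * p2 * (p1 * p3 - p2 * p2)
                + 2 * p2 * (p0 * p4 - p2 * p2))
    + 4 * a ^+ 3 * p1 * (p0 * p4 - p2 * p2)
    + a ^+ 4 * p0 * (p0 * p4 - p2 * p2).
  by rewrite /S; ring.
apply: ltr_wpDl; last by rewrite !mulr_gt0 ?exprn_gt0.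
have gapC_ge0 := ltW gapC.
by do ![assumption | exact: ler0n | apply: addr_ge0 | apply: mulr_ge0 | apply: exprn_ge0].
Qed.

Theorem theorem13 (R : realType) (N : nat) (c : 'I_N -> R) (alpha : R) :
  (forall j, 0 <= c j) ->
  (exists j, c j != 0) ->
  (exists i j, c i != c j) ->
  0 < alpha ->
  kappa4 (fun j => c j + alpha) < kappa4 c.
Proof.
move=> c_ge0 [k ck_neq0] [i [j cij]] alpha_gt0.
rewrite !kappa4E pow_sum_addr4 pow_sum_addr2.
apply: shifted_ratio_lt => //.
- exact: (pow_sum_gt0 c_ge0 0 ck_neq0).
- exact: pow_sum_ge0.
- exact: (pow_sum_gt0 c_ge0 2 ck_neq0).
- exact: pow_sum_mul_le c_ge0 1 1 2.
- exact: pow_sum_mul_le c_ge0 1 1 1.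
- exact: (pow_sum_mul_lt c_ge0 (m := 2) (n := 2) isT isT cij).
Qed.
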